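(* Let $0<e_0\le1$ and let $d\ge1$ be an integer. For any instance of $P_m, e_{i,k}\ge e_0\mid\mid C_{\max}$, Algorithm 1 with parameter $d$ returns a schedule with makespan at most $\left(1+\frac{m}{d\, e_0}\right)C^*_{\max}$, where $C^*_{\max}$ is the optimal makespan.
   Context: Shared-processing parallel machine scheduling: $m$ identical machines $M_1,\dots,M_m$, $n$ primary jobs available at time $0$ with processing times $p_j>0$, each processed without interruption on one machine, jobs on a machine processed one after another. The time axis of machine $M_i$ is partitioned into consecutive intervals $(0,t_{i,1}],(t_{i,1},t_{i,2}],\dots$ with sharing ratios $e_{i,k}\in(0,1]$; during the $k$-th interval $M_i$ processes primary work at rate $e_{i,k}$. In $P_m, e_{i,k}\ge e_0\mid\mid C_{\max}$ all sharing ratios satisfy $e_{i,k}\ge e_0$ and the goal is to minimize the makespan. LS-ECT: jobs of a list are scheduled one by one; each job is appended after the jobs already assigned to some machine, choosing the machine on which it would complete earliest. Algorithm 1 (parameter $d$): (1) find the $d$ largest jobs (the ''large'' jobs); (2) for each of the possible assignments of the large jobs to the machines, schedule the large jobs on their assigned machines and then schedule the remaining jobs using LS-ECT; (3) return, among all schedules obtained in step (2), one with minimum makespan. *)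

From HB Require Import structures.
From mathcomp Require Import all_boot all_order all_algebra.
From mathcomp Require Import reals.
Set Implicit Arguments. Unset Strict Implicit. Unset Printing Implicit Defensive.
Import Order.TTheory GRing.Theory Num.Theory.
Local Open Scope ring_scope.

(* Sharing profile of one machine: breakpoints t_0 = 0 < t_1 < t_2 < ...
   (the k-th interval, 0-indexed, is (bp k, bp k.+1]) and sharing ratios
   ratio k on that interval. *)
Record profile (R : realType) := Profile { bp : nat -> R ; ratio : nat -> R }.

Definition valid_profile (R : realType) (e0 : R) (P : profile R) : Prop :=
  [/\ bp P 0 = 0,
      (forall k, bp P k < bp P k.+1),
      (forall T : R, exists k, T <= bp P k) &
      (forall k, e0 <= ratio P k <= 1)].

(* Primary work processed on the machine during (0, T] by the first N
   intervals; equals the total work processed during (0,T] when T <= bp P N. *)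
Definition workN (R : realType) (P : profile R) (N : nat) (T : R) : R :=
  \sum_(k < N) ratio P k * (Num.min T (bp P k.+1) - Num.min T (bp P k)).

(* A job of processing time q started at time s, processed without
   interruption, completes at time C. *)
Definition processes (R : realType) (P : profile R) (s C q : R) : Prop :=
  0 <= s /\ s <= C /\
  exists N, C <= bp P N /\ workN P N C - workN P N s = q.

Definition mkspan (R : realType) (I : finType) (C : I -> R) : R :=
  \big[Num.max/0]_(i : I) C i.

Definition feasible (R : realType) (m n : nat) (prof : 'I_m -> profile R)
  (p : 'I_n -> R) (a : 'I_n -> 'I_m) (S C : 'I_n -> R) : Prop :=
  (forall j, processes (prof (a j)) (S j) (C j) (p j)) /\
  (forall j j', j != j' -> a j = a j' -> C j <= S j' \/ C j' <= S j).

Inductive seq_finish (R : realType) (n : nat) (P : profile R) (p : 'I_n -> R)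
  : R -> seq 'I_n -> R -> Prop :=
| sf_nil F : seq_finish P p F [::] F
| sf_cons F C j s G :
    processes P F C (p j) -> seq_finish P p C s G ->
    seq_finish P p F (j :: s) G.

(* LS-ECT: from machine sequences sq with finishing times F, schedule the jobs
   of list l one by one, each appended to a machine on which it completes
   earliest (ties broken arbitrarily), yielding sq' and F'. *)
Inductive lsect (R : realType) (m n : nat) (prof : 'I_m -> profile R)
  (p : 'I_n -> R) :
  ('I_m -> seq 'I_n) -> ('I_m -> R) -> seq 'I_n ->
  ('I_m -> seq 'I_n) -> ('I_m -> R) -> Prop :=
| ls_nil sq F : lsect prof p sq F [::] sq F
| ls_cons sq F j l i C sq' F' :
    processes (prof i) (F i) C (p j) ->
    (forall i' C', processes (prof i') (F i') C' (p j) -> C <= C') ->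
    lsect prof p (fun k => if k == i then rcons (sq k) j else sq k)
                 (fun k => if k == i then C else F k) l sq' F' ->
    lsect prof p sq F (j :: l) sq' F'.

Definition large_jobs (R : realType) (n : nat) (p : 'I_n -> R) (d : nat)
  (L : {set 'I_n}) : Prop :=
  #|L| = minn d n /\ (forall j k, j \in L -> k \notin L -> p k <= p j).

(* A schedule (machine sequences sq with finishing times F) obtained in step
   (2) for the assignment f of the large jobs L: the large jobs assigned to
   machine i are processed first on machine i from time 0 (in some order),
   then the remaining jobs (in some list order) are scheduled by LS-ECT. *)
Definition candidate (R : realType) (m n : nat) (prof : 'I_m -> profile R)
  (p : 'I_n -> R) (L : {set 'I_n}) (f : 'I_n -> 'I_m)
  (sq : 'I_m -> seq 'I_n) (F : 'I_m -> R) : Prop :=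
  exists (sq0 : 'I_m -> seq 'I_n) (F0 : 'I_m -> R) (l : seq 'I_n),
    [/\ (forall i, perm_eq (sq0 i) [seq j <- enum L | f j == i]),
        (forall i, seq_finish (prof i) p 0 (sq0 i) (F0 i)),
        perm_eq l (enum (~: L)) &
        lsect prof p sq0 F0 l sq F].

(* Output of Algorithm 1 (with large-job set L): a candidate schedule whose
   makespan is at most that of the schedule computed for every assignment
   of the large jobs. *)
Definition alg1_output (R : realType) (m n : nat) (prof : 'I_m -> profile R)
  (p : 'I_n -> R) (L : {set 'I_n}) (sq : 'I_m -> seq 'I_n) (F : 'I_m -> R)
  : Prop :=
  (exists f, candidate prof p L f sq F) /\
  (forall f : 'I_n -> 'I_m, exists sq' F',
      candidate prof p L f sq' F' /\ mkspan F <= mkspan F').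

From Pilot Require Import Defs.
From HB Require Import structures.
From mathcomp Require Import all_boot all_order all_algebra.
From mathcomp Require Import reals.
From mathcomp Require Import ring lra zify.
From mathcomp Require Import boolp classical_sets topology normedtype.
Import numFieldNormedType.Exports.
Set Implicit Arguments. Unset Strict Implicit. Unset Printing Implicit Defensive.
Import Order.TTheory GRing.Theory Num.Theory.
Local Open Scope ring_scope.

(* Let T be the makespan of an optimal schedule and run Algorithm 1's step (2) on the
   assignment of the large jobs used by that schedule. By time T machine i can process
   at most W_i(T) <= T units of work, and the optimal schedule fits all jobs into these
   budgets; hence the large jobs put on each machine finish by T, and every small job
   has p_j <= (total size of the d large jobs) / d <= m T / d.  During LS-ECT the work
   already placed plus the work still waiting never exceeds sum_i W_i(T), so when a
   small job is placed some machine is idle before T; as rates are at least e0, the job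
   completes by T + p_j / e0 <= (1 + m / (d e0)) T.  Algorithm 1 returns a schedule
   that is no worse. *)

Section ProfileWork.
Variables (R : realType) (e0 : R) (P : profile R).
Hypothesis e0_range : 0 < e0 <= 1.
Hypothesis P_valid : valid_profile e0 P.

Let e0_gt0 : 0 < e0. Proof. by case/andP: e0_range. Qed.

Lemma bp_le k k' : (k <= k')%N -> bp P k <= bp P k'.
Proof.
case: P_valid => _ bp_lt _ _ /subnK <-; elim: (k' - k)%N => [|d IH] //.
by rewrite addSn (le_trans IH) // ltW.
Qed.

Lemma bp_ge0 k : 0 <= bp P k.
Proof. by case: P_valid => <- _ _ _; exact: bp_le. Qed.

Lemma ratio_ge0 k : 0 <= Defs.ratio P k.
Proof. by case: P_valid => _ _ _ /(_ k) /andP[+ _]; apply: le_trans; exact: ltW. Qed.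

Let piece k T := Num.min T (bp P k.+1) - Num.min T (bp P k).

Let piece_le k x y : x <= y -> piece k x <= piece k y.
Proof.
move=> le_xy; have bp_k : bp P k <= bp P k.+1 by exact: bp_le.
rewrite /piece !minEle.
by case: (leP x (bp P k)); case: (leP x (bp P k.+1));
   case: (leP y (bp P k)); case: (leP y (bp P k.+1)); lra.
Qed.

Let sum_piece N T : 0 <= T -> \sum_(k < N) piece k T = Num.min T (bp P N).
Proof.
move=> T_ge0; rewrite -(big_mkord xpredT (fun k => piece k T)).
rewrite (telescope_sumr (fun k => Num.min T (bp P k))) //.
by case: P_valid => -> _ _ _; rewrite (min_idPr T_ge0) subr0.
Qed.

Let workN_sub N x y : workN P N y - workN P N x =
  \sum_(k < N) Defs.ratio P k * (piece k y - piece k x).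
Proof. by rewrite /workN -sumrB; apply: eq_bigr => k _; rewrite /piece; ring. Qed.

Lemma workN_widen N N' T : (N <= N')%N -> T <= bp P N -> workN P N' T = workN P N T.
Proof.
move=> /subnK <- T_le; elim: (N' - N)%N => [|k IH] //.
rewrite addSn /workN big_ord_recr /= -/(workN _ _ _) IH.
have T_le_k : T <= bp P (k + N) by rewrite (le_trans T_le) // bp_le // leq_addl.
have T_le_k1 : T <= bp P (k + N).+1 by rewrite (le_trans T_le_k) // bp_le.
by rewrite (min_idPl T_le_k) (min_idPl T_le_k1) subrr mulr0 addr0.
Qed.

Lemma workN0 N : workN P N 0 = 0.
Proof. by rewrite /workN big1 // => k _; rewrite !(min_idPl (bp_ge0 _)) subrr mulr0. Qed.

Lemma workN_le N x y : x <= y -> workN P N x <= workN P N y.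
Proof.
move=> le_xy; rewrite -subr_ge0 workN_sub; apply: sumr_ge0 => k _.
by rewrite mulr_ge0 ?ratio_ge0 // subr_ge0 piece_le.
Qed.

Lemma workN_sub_bounds N x y : 0 <= x -> x <= y -> y <= bp P N ->
  e0 * (y - x) <= workN P N y - workN P N x <= y - x.
Proof.
move=> x_ge0 le_xy y_le; rewrite workN_sub.
have -> : y - x = \sum_(k < N) (piece k y - piece k x).
  rewrite sumrB !sum_piece ?(le_trans x_ge0) //.
  by rewrite (min_idPl y_le) (min_idPl (le_trans le_xy y_le)).
rewrite mulr_sumr; apply/andP; split; apply: ler_sum => k _;
  have piece_ge0 : 0 <= piece k y - piece k x by rewrite subr_ge0 piece_le.
- by rewrite ler_wpM2r //; case: P_valid => _ _ _ /(_ k) /andP[].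
- by rewrite ler_piMl //; case: P_valid => _ _ _ /(_ k) /andP[].
Qed.

Lemma workN_le_id N T : 0 <= T -> T <= bp P N -> workN P N T <= T.
Proof.
move=> T_ge0 T_le; have /andP[_] := workN_sub_bounds (lexx 0) T_ge0 T_le.
by rewrite workN0 !subr0.
Qed.

Lemma workN_le_cancel N x y : 0 <= y -> x <= bp P N ->
  workN P N x <= workN P N y -> x <= y.
Proof.
move=> y_ge0 x_le W_le; rewrite leNgt; apply/negP => lt_yx.
have /andP[lower _] := workN_sub_bounds y_ge0 (ltW lt_yx) x_le.
have : 0 < e0 * (x - y) by rewrite mulr_gt0 // subr_gt0.
lra.
Qed.

Lemma processes_workN s C q N : processes P s C q -> C <= bp P N ->
  workN P N C - workN P N s = q.
Proof.
case=> _ [le_sC [N0 [C_le <-]]] C_leN.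
have s_leN := le_trans le_sC C_leN; have s_leN0 := le_trans le_sC C_le.
by rewrite -(workN_widen (leq_maxl N N0) C_leN) -(workN_widen (leq_maxr N N0) C_le)
  -(workN_widen (leq_maxl N N0) s_leN) -(workN_widen (leq_maxr N N0) s_leN0).
Qed.

Lemma workN_continuous N : continuous (workN P N).
Proof.
elim: N => [|N IH] x.
  have -> : workN P 0 = fun=> 0 by apply: funext => T; rewrite /workN big_ord0.
  exact: cst_continuous.
have -> : workN P N.+1 = workN P N \+ (fun T => Defs.ratio P N *
    (Num.min T (bp P N.+1) - Num.min T (bp P N))).
  by apply: funext => T; rewrite /workN big_ord_recr.
apply: continuousD; first exact: IH.
apply: continuousM; first exact: cst_continuous.
by apply: continuousB; apply: continuous_min => //; exact: cst_continuous.
Qed.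

(* At least q units of work are processed during [s, s + q / e0]; conclude by the IVT. *)
Lemma processes_exists s q N : 0 <= s -> 0 <= q -> s + q / e0 <= bp P N ->
  exists2 C, processes P s C q & C <= s + q / e0.
Proof.
move=> s_ge0 q_ge0 end_le.
have le_s_end : s <= s + q / e0 by rewrite lerDl divr_ge0 // ltW.
have /andP[lower _] := workN_sub_bounds s_ge0 le_s_end end_le.
rewrite [_ - s]addrC addKr mulrC divfK ?gt_eqF // in lower.
have W_cont : {within `[s, s + q / e0], continuous (workN P N)}%classic.
  by apply: continuous_subspaceT; exact: workN_continuous.
have W_le := workN_le N le_s_end.
have [|C] := IVT le_s_end W_cont (v := workN P N s + q).
  by rewrite (min_idPl W_le) (max_idPr W_le) lerDl q_ge0 -lerBrDl.
rewrite in_itv /= => /andP[le_sC C_le] W_C.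
exists C => //; do 2!split=> //.
by exists N; split; [exact: le_trans end_le | rewrite W_C addrC addKr].
Qed.

Lemma seq_finish_workN n (p : 'I_n -> R) s0 s G : seq_finish P p s0 s G ->
  s0 <= G /\ forall N, G <= bp P N -> workN P N G - workN P N s0 = \sum_(j <- s) p j.
Proof.
elim=> [F | F C j s' G' proc_j _ [le_CG IH]].
  by split => // N _; rewrite subrr big_nil.
have [_ [le_FC _]] := proc_j.
split=> [|N G_le]; first exact: le_trans le_CG.
rewrite big_cons -(IH N G_le) -(processes_workN proc_j (le_trans le_CG G_le)).
ring.
Qed.

End ProfileWork.

Lemma exists_common_horizon (R : realType) (e0 : R) m (prof : 'I_m -> profile R) (B : R) :
  (forall i, valid_profile e0 (prof i)) ->
  exists N : 'I_m -> nat, forall i, B <= bp (prof i) (N i).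
Proof.
move=> prof_valid; apply: (@fin_all_exists _ (fun=> nat) (fun i k => B <= bp (prof i) k)).
by move=> i; case: (prof_valid i) => _ _ unbounded _; exact: unbounded.
Qed.

(* Induct on the number of intervals: the ones ending before interval j starts fit in
   [t0, S j], the others in [C j, T]. *)
Lemma sum_disjoint_increments_le (R : realType) (I : finType) (W : R -> R)
  (S C : I -> R) (A : {set I}) t0 T :
  {homo W : x y / x <= y} -> t0 <= T ->
  (forall j, j \in A -> [/\ t0 <= S j, S j <= C j & C j <= T]) ->
  {in A &, forall j j', j != j' -> C j <= S j' \/ C j' <= S j} ->
  \sum_(j in A) (W (C j) - W (S j)) <= W T - W t0.
Proof.
move=> W_le; have [k] := ubnP #|A|; elim: k A t0 T => // k IH A t0 T card_lt.
move=> le_t0T inside disjoint.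
have [->|[j jA]] := set_0Vmem A; first by rewrite big_set0 subr_ge0 W_le.
have [t0_le S_le_C C_le] := inside j jA.
have card_Aj : (#|A :\ j| < k)%N by move: card_lt; rewrite (cardsD1 j A) jA.
rewrite (big_setD1 _ jA) /= (big_setID [set j' | C j' <= S j]) /=.
have before : \sum_(i in (A :\ j) :&: [set j' | C j' <= S j]) (W (C i) - W (S i))
    <= W (S j) - W t0.
  apply: IH => //.
  - exact: leq_ltn_trans (subset_leq_card (subsetIl _ _)) card_Aj.
  - move=> i; rewrite !inE => /andP[/andP[_ iA] Ci_le].
    by have [] := inside i iA.
  - by move=> i i'; rewrite !inE => /andP[/andP[_ iA] _] /andP[/andP[_ i'A] _]; exact: disjoint.
have after : \sum_(i in (A :\ j) :\: [set j' | C j' <= S j]) (W (C i) - W (S i))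
    <= W T - W (C j).
  apply: IH => //.
  - exact: leq_ltn_trans (subset_leq_card (subsetDl _ _)) card_Aj.
  - move=> i; rewrite !inE => /andP[Ci_gt /andP[ij iA]].
    have [_ S_le_C' C_le'] := inside i iA; split=> //.
    have [|//|Ci_le] := disjoint j i jA iA; first by rewrite eq_sym.
    by rewrite Ci_le in Ci_gt.
  - by move=> i i'; rewrite !inE => /andP[_ /andP[_ iA]] /andP[_ /andP[_ i'A]]; exact: disjoint.
lra.
Qed.

Lemma le_mkspan (R : realType) (I : finType) (C : I -> R) j : C j <= mkspan C.
Proof. by rewrite /mkspan (bigD1 j) //= le_max lexx. Qed.

Lemma mkspan_ge0 (R : realType) (I : finType) (C : I -> R) : 0 <= mkspan C.
Proof. by rewrite /mkspan; elim/big_rec: _ => // i x _ x_ge0; rewrite le_max x_ge0 orbT. Qed.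

Lemma mkspan_le (R : realType) (I : finType) (C : I -> R) B :
  0 <= B -> (forall i, C i <= B) -> mkspan C <= B.
Proof. by move=> B_ge0 C_le; rewrite /mkspan; elim/big_ind: _ => // x y; rewrite ge_max => -> ->. Qed.

Lemma large_jobs_small_le (R : realType) n (p : 'I_n -> R) d L j :
  large_jobs p d L -> j \notin L -> p j *+ d <= \sum_(k in L) p k.
Proof.
case=> card_L large j_notL.
have -> : d = #|L|.
  have : (0 < #|~: L|)%N by apply/card_gt0P; exists j; rewrite inE.
  by have := cardsC L; rewrite card_ord; lia.
by rewrite -sumr_const; apply: ler_sum => k kL; exact: large.
Qed.

Section FeasibleSchedule.
Variables (R : realType) (e0 : R) (m n : nat) (prof : 'I_m -> profile R) (p : 'I_n -> R).
Hypothesis e0_range : 0 < e0 <= 1.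
Hypothesis prof_valid : forall i, valid_profile e0 (prof i).
Hypothesis p_gt0 : forall j, 0 < p j.
Variables (a : 'I_n -> 'I_m) (S C : 'I_n -> R) (T : R).
Hypothesis feasible_aSC : feasible prof p a S C.
Hypothesis T_ge0 : 0 <= T.
Hypothesis C_le_T : forall j, C j <= T.

Lemma machine_load_le i N : T <= bp (prof i) N ->
  \sum_(j | a j == i) p j <= workN (prof i) N T.
Proof.
move=> T_le; case: feasible_aSC => proc disj.
suff : \sum_(j | a j == i) p j <= workN (prof i) N T - workN (prof i) N 0.
  by rewrite (workN0 (prof_valid i)) subr0.
rewrite (eq_bigl (mem [set j | a j == i])) => [|j]; last by rewrite !inE.
rewrite (eq_bigr (fun j => workN (prof i) N (C j) - workN (prof i) N (S j))) => [|j].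
  apply: sum_disjoint_increments_le => //.
  - exact: workN_le e0_range (prof_valid i) N.
  - by move=> j _; have [S_ge0 [S_le_C _]] := proc j.
  - move=> j j'; rewrite !inE => /eqP aj /eqP aj' neq.
    by apply: disj; rewrite // aj aj'.
rewrite !inE => /eqP aj; have := proc j; rewrite aj => proc_j.
exact/esym/(processes_workN (prof_valid i) proc_j (le_trans (C_le_T j) T_le)).
Qed.

Lemma total_work_le_workN (N : 'I_m -> nat) : (forall i, T <= bp (prof i) (N i)) ->
  \sum_j p j <= \sum_i workN (prof i) (N i) T.
Proof.
move=> T_le; rewrite (partition_big a xpredT) //=.
by apply: ler_sum => i _; exact: machine_load_le.
Qed.

Lemma total_work_le : \sum_j p j <= m%:R * T.
Proof.
have [N T_le] := exists_common_horizon T prof_valid.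
rewrite (le_trans (total_work_le_workN T_le)) // mulr_natl.
rewrite -[m in T *+ m]card_ord -sumr_const.
by apply: ler_sum => i _; exact: (workN_le_id (prof_valid i) T_ge0 (T_le i)).
Qed.

Lemma small_job_end_le d L j : (0 < d)%N -> large_jobs p d L -> j \notin L ->
  T + p j / e0 <= (1 + m%:R / (d%:R * e0)) * T.
Proof.
move=> d_gt0 large j_notL.
have d_pj_le : d%:R * p j <= m%:R * T.
  rewrite mulr_natl (le_trans (large_jobs_small_le large j_notL)) //.
  rewrite (le_trans _ total_work_le) // [leRHS](bigID (mem L)) /= lerDl.
  by apply: sumr_ge0 => k _; exact: ltW.
have d_gt0' : (0 : R) < d%:R by rewrite ltr0n.
have e0_gt0 : 0 < e0 by case/andP: e0_range.
rewrite mulrDl mul1r lerD2l mulrAC ler_pdivlMr ?mulr_gt0 //.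
by rewrite mulrCA divfK ?gt_eqF.
Qed.

Lemma large_stage_invariant (L : {set 'I_n}) (N : 'I_m -> nat) (sq0 : 'I_m -> seq 'I_n)
    (F0 : 'I_m -> R) (l : seq 'I_n) :
  (forall i, T <= bp (prof i) (N i)) ->
  (forall i, perm_eq (sq0 i) [seq j <- enum L | a j == i]) ->
  (forall i, seq_finish (prof i) p 0 (sq0 i) (F0 i)) ->
  perm_eq l (enum (~: L)) ->
  (forall i, 0 <= F0 i <= T) /\
  \sum_i workN (prof i) (N i) (F0 i) + \sum_(j <- l) p j <= \sum_i workN (prof i) (N i) T.
Proof.
move=> T_le perm_sq0 fin_sq0 perm_l.
have work_F0 i M : F0 i <= bp (prof i) M ->
    workN (prof i) M (F0 i) = \sum_(j in L | a j == i) p j.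
  have [_ work] := seq_finish_workN (prof_valid i) (fin_sq0 i).
  move=> F0_le; have := work M F0_le; rewrite (workN0 (prof_valid i)) subr0 => ->.
  by rewrite (perm_big _ (perm_sq0 i)) big_filter big_enum_cond.
have F0_range i : 0 <= F0 i <= T.
  have [-> _] := seq_finish_workN (prof_valid i) (fin_sq0 i).
  have [M] : exists M, Num.max (F0 i) T <= bp (prof i) M.
    by case: (prof_valid i) => _ _ unbounded _; exact: unbounded.
  rewrite ge_max => /andP[F0_le T_leM].
  apply: (workN_le_cancel e0_range (prof_valid i) T_ge0 F0_le).
  rewrite work_F0 // (le_trans _ (machine_load_le T_leM)) //.
  rewrite [leLHS]big_mkcond [leRHS]big_mkcond /=; apply: ler_sum => j _.
  by case: (j \in L); case: (a j == i) => //; exact: ltW.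
split=> //.
rewrite (eq_bigr (fun i => \sum_(j in L | a j == i) p j)) => [|i _]; last first.
  by apply: work_F0; rewrite (le_trans _ (T_le i)) //; case/andP: (F0_range i).
rewrite -(partition_big a xpredT) //= (perm_big _ perm_l) big_enum.
rewrite (le_trans _ (total_work_le_workN T_le)) // [leRHS](bigID (mem L)) /=.
by rewrite [X in _ + X <= _](eq_bigl (fun j => j \notin L)) => [|j]; rewrite ?inE.
Qed.

End FeasibleSchedule.

Section ListScheduling.
Variables (R : realType) (e0 : R) (m n : nat) (prof : 'I_m -> profile R) (p : 'I_n -> R).
Hypothesis e0_range : 0 < e0 <= 1.
Hypothesis prof_valid : forall i, valid_profile e0 (prof i).
Hypothesis p_gt0 : forall j, 0 < p j.
Variables (T B : R) (N : 'I_m -> nat).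
Hypothesis B_le_bp : forall i, B <= bp (prof i) (N i).

Let W i := workN (prof i) (N i).

(* Otherwise every machine is busy up to time T (a free one would finish job j
   before T + p j / e0), so more than the available work would be assigned. *)
Lemma ect_completion_le (F : 'I_m -> R) j Cj :
  (forall i, 0 <= F i) -> T + p j / e0 <= B ->
  \sum_i W i (F i) + p j <= \sum_i W i T ->
  (forall i C, processes (prof i) (F i) C (p j) -> Cj <= C) ->
  Cj <= T + p j / e0.
Proof.
move=> F_ge0 end_le load_le Cj_min; rewrite leNgt; apply/negP => Cj_gt.
have T_le_F i : T <= F i.
  rewrite leNgt; apply/negP => F_lt.
  have end_i : F i + p j / e0 <= bp (prof i) (N i).
    by rewrite (le_trans _ (B_le_bp i)) // (le_trans _ end_le) // lerD2r ltW.
  have [C /Cj_min Cj_le C_le] :=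
    processes_exists e0_range (prof_valid i) (F_ge0 i) (ltW (p_gt0 j)) end_i.
  lra.
have : \sum_i W i T <= \sum_i W i (F i).
  by apply: ler_sum => i _; exact: (workN_le e0_range (prof_valid i)).
by have := p_gt0 j; lra.
Qed.

Lemma lsect_finish_le sq F l sq' F' :
  lsect prof p sq F l sq' F' ->
  (forall j, j \in l -> T + p j / e0 <= B) ->
  (forall i, 0 <= F i <= B) ->
  \sum_i W i (F i) + \sum_(j <- l) p j <= \sum_i W i T ->
  forall i, F' i <= B.
Proof.
elim=> {sq F l sq' F'} [sq F | sq F j l i Cj sq' F' proc_j Cj_min _ IH]
  small F_range load_le; first by move=> i; case/andP: (F_range i).
have end_le : T + p j / e0 <= B by apply: small; rewrite inE eqxx.
have Cj_le : Cj <= T + p j / e0.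
  apply: ect_completion_le end_le _ Cj_min => [k|]; first by case/andP: (F_range k).
  rewrite (le_trans _ load_le) // big_cons addrA lerDl.
  by apply: sumr_ge0 => k _; exact: ltW.
have [F_ge0 [le_FC _]] := proc_j.
have work_j : W i Cj - W i (F i) = p j :=
  processes_workN (prof_valid i) proc_j (le_trans (le_trans Cj_le end_le) (B_le_bp i)).
apply: IH => [k k_l | k | ].
- by apply: small; rewrite inE k_l orbT.
- case: eqP => _; last exact: F_range.
  by rewrite (le_trans F_ge0 le_FC) (le_trans Cj_le end_le).
- rewrite (bigD1 i) //= eqxx (eq_bigr (fun k => W k (F k))) => [|k /negbTE -> //].
  by rewrite (bigD1 i) //= big_cons in load_le; lra.
Qed.

End ListScheduling.

Theorem lemma1 (R : realType) (e0 : R) (d m n : nat)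
  (prof : 'I_m -> profile R) (p : 'I_n -> R) (L : {set 'I_n})
  (sq : 'I_m -> seq 'I_n) (F : 'I_m -> R)
  (a : 'I_n -> 'I_m) (S C : 'I_n -> R) :
  0 < e0 <= 1 -> (1 <= d)%N ->
  (forall i, valid_profile e0 (prof i)) ->
  (forall j, 0 < p j) ->
  large_jobs p d L ->
  alg1_output prof p L sq F ->
  feasible prof p a S C ->
  mkspan F <= (1 + m%:R / (d%:R * e0)) * mkspan C.
Proof.
move=> e0_range d_gt0 prof_valid p_gt0 large [_ alg_best] feas.
have [sq' [F' [[sq0 [F0 [l [perm_sq0 fin_sq0 perm_l ls]]]] F_le_F']]] := alg_best a.
set T := mkspan C; set B := (1 + m%:R / (d%:R * e0)) * T.
have T_ge0 : 0 <= T := mkspan_ge0 C.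
have C_le_T j : C j <= T := le_mkspan C j.
have e0_gt0 : 0 < e0 by case/andP: e0_range.
have T_le_B : T <= B.
  by rewrite /B mulrDl mul1r lerDl mulr_ge0 // divr_ge0 // mulr_ge0 // ltW.
have [N B_le_bp] := exists_common_horizon B prof_valid.
have T_le_bp i : T <= bp (prof i) (N i) := le_trans T_le_B (B_le_bp i).
have [F0_range load_le] := large_stage_invariant e0_range prof_valid p_gt0 feas
  T_ge0 C_le_T T_le_bp perm_sq0 fin_sq0 perm_l.
apply: (le_trans F_le_F'); apply: mkspan_le => [|i]; first exact: le_trans T_le_B.
apply: (lsect_finish_le e0_range prof_valid p_gt0 B_le_bp ls _ _ load_le) => [j|k].
  rewrite (perm_mem perm_l) mem_enum inE => j_small.
  exact: (small_job_end_le e0_range prof_valid p_gt0 feas T_ge0 C_le_T d_gt0 large j_small).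
by have /andP[-> /le_trans ->] := F0_range k.
Qed.
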